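(* For every finite multiset $\Gamma$ and formulas $\varphi,\psi,\delta,\chi$: if $\Gamma,(\varphi\to\psi)\to\delta\Rightarrow\chi$ is provable in $\mathsf{G4iSLt}$, then $\Gamma,\varphi,\psi\to\delta,\psi\to\delta\Rightarrow\chi$ is provable in $\mathsf{G4iSLt}$.
   Context: Formulas are built by the grammar $\varphi ::= p \mid \bot \mid \varphi\land\varphi \mid \varphi\lor\varphi \mid \varphi\to\varphi \mid \Box\varphi$, with $p$ ranging over a countably infinite set of propositional variables. For a multiset $\Gamma$, $\Box\Gamma=\{\Box\psi:\psi\in\Gamma\}$; a boxed formula is one of the form $\Box\psi$. A sequent is $\Gamma\Rightarrow\chi$ with $\Gamma$ a finite multiset of formulas and $\chi$ a formula. The sequent calculus $\mathsf{G4iSLt}$ has the following rules, where $p$ is a propositional variable and $\Phi$ always denotes a multiset containing no boxed formula: (⊥L) $\bot,\Gamma\Rightarrow\chi$ (no premise); (IdP) $\Gamma,p\Rightarrow p$ (no premise); (∧L) from $\Gamma,\varphi,\psi\Rightarrow\chi$ infer $\Gamma,\varphi\land\psi\Rightarrow\chi$; (∧R) from $\Gamma\Rightarrow\varphi$ and $\Gamma\Rightarrow\psi$ infer $\Gamma\Rightarrow\varphi\land\psi$; (∨L) from $\Gamma,\varphi\Rightarrow\chi$ and $\Gamma,\psi\Rightarrow\chi$ infer $\Gamma,\varphi\lor\psi\Rightarrow\chi$; (∨R$_i$), $i\in\{1,2\}$: from $\Gamma\Rightarrow\varphi_i$ infer $\Gamma\Rightarrow\varphi_1\lor\varphi_2$;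 (p→L) from $\Gamma,p,\varphi\Rightarrow\chi$ infer $\Gamma,p,p\to\varphi\Rightarrow\chi$; (→R) from $\Gamma,\varphi\Rightarrow\psi$ infer $\Gamma\Rightarrow\varphi\to\psi$; (□→L) from $\Phi,\Gamma,\psi,\Box\varphi\Rightarrow\varphi$ and $\Phi,\Box\Gamma,\psi\Rightarrow\chi$ infer $\Phi,\Box\Gamma,\Box\varphi\to\psi\Rightarrow\chi$; (SLtR) from $\Phi,\Gamma,\Box\varphi\Rightarrow\varphi$ infer $\Phi,\Box\Gamma\Rightarrow\Box\varphi$; (∧→L) from $\Gamma,\varphi\to(\psi\to\chi)\Rightarrow\delta$ infer $\Gamma,(\varphi\land\psi)\to\chi\Rightarrow\delta$; (∨→L) from $\Gamma,\varphi\to\chi,\psi\to\chi\Rightarrow\delta$ infer $\Gamma,(\varphi\lor\psi)\to\chi\Rightarrow\delta$; (→→L) from $\Gamma,\psi\to\chi\Rightarrow\varphi\to\psi$ and $\Gamma,\chi\Rightarrow\delta$ infer $\Gamma,(\varphi\to\psi)\to\chi\Rightarrow\delta$. A proof of a sequent $S$ is a finite tree of sequents with root $S$ in which each interior node together with its children forms an instance of a rule (conclusion, premises) and each leaf is the conclusion of a premise-free rule; $S$ is provable if it has a proof. *)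

(* Sequents Γ ⇒ χ with Γ a finite multiset, represented as a
   list; every rule is closed under permutation of the antecedent, so the
   derivability relation only depends on the multiset. *)
From Stdlib Require Import List Permutation.
Import ListNotations.

Inductive form : Type :=
| Var : nat -> form
| Bot : form
| And : form -> form -> form
| Or  : form -> form -> form
| Imp : form -> form -> form
| Box : form -> form.

Definition is_boxed (f : form) : Prop :=
  match f with Box _ => True | _ => False end.

Definition box_free (Φ : list form) : Prop := Forall (fun f => ~ is_boxed f) Φ.

Definition boxes (Γ : list form) : list form := map Box Γ.

Inductive G4iSLt : list form -> form -> Prop :=
| BotL : forall Δ Γ χ, Permutation Δ (Bot :: Γ) -> G4iSLt Δ χ
| IdP : forall Δ Γ p, Permutation Δ (Var p :: Γ) -> G4iSLt Δ (Var p)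
| AndL : forall Δ Γ φ ψ χ, Permutation Δ (And φ ψ :: Γ) ->
    G4iSLt (φ :: ψ :: Γ) χ -> G4iSLt Δ χ
| AndR : forall Γ φ ψ, G4iSLt Γ φ -> G4iSLt Γ ψ -> G4iSLt Γ (And φ ψ)
| OrL : forall Δ Γ φ ψ χ, Permutation Δ (Or φ ψ :: Γ) ->
    G4iSLt (φ :: Γ) χ -> G4iSLt (ψ :: Γ) χ -> G4iSLt Δ χ
| OrR1 : forall Γ φ ψ, G4iSLt Γ φ -> G4iSLt Γ (Or φ ψ)
| OrR2 : forall Γ φ ψ, G4iSLt Γ ψ -> G4iSLt Γ (Or φ ψ)
| PImpL : forall Δ Γ p φ χ, Permutation Δ (Var p :: Imp (Var p) φ :: Γ) ->
    G4iSLt (Var p :: φ :: Γ) χ -> G4iSLt Δ χ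
| ImpR : forall Γ φ ψ, G4iSLt (φ :: Γ) ψ -> G4iSLt Γ (Imp φ ψ)
| BoxImpL : forall Δ Φ Γ φ ψ χ, box_free Φ ->
    Permutation Δ (Imp (Box φ) ψ :: Φ ++ boxes Γ) ->
    G4iSLt (Box φ :: ψ :: Φ ++ Γ) φ ->
    G4iSLt (ψ :: Φ ++ boxes Γ) χ -> G4iSLt Δ χ
| SLtR : forall Δ Φ Γ φ, box_free Φ ->
    Permutation Δ (Φ ++ boxes Γ) ->
    G4iSLt (Box φ :: Φ ++ Γ) φ -> G4iSLt Δ (Box φ)
| AndImpL : forall Δ Γ φ ψ χ δ, Permutation Δ (Imp (And φ ψ) χ :: Γ) ->
    G4iSLt (Imp φ (Imp ψ χ) :: Γ) δ -> G4iSLt Δ δ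
| OrImpL : forall Δ Γ φ ψ χ δ, Permutation Δ (Imp (Or φ ψ) χ :: Γ) ->
    G4iSLt (Imp φ χ :: Imp ψ χ :: Γ) δ -> G4iSLt Δ δ
| ImpImpL : forall Δ Γ φ ψ χ δ, Permutation Δ (Imp (Imp φ ψ) χ :: Γ) ->
    G4iSLt (Imp ψ χ :: Γ) (Imp φ ψ) -> G4iSLt (χ :: Γ) δ -> G4iSLt Δ δ.

(* The proof is by the usual inversion technique: the formula (φ → ψ) → δ is
   replaced throughout a derivation by φ, ψ → δ, ψ → δ.  Every rule in which it
   is not principal commutes with the replacement; the only rule where it can
   be principal is (→→L), whose premises  ψ → δ, Γ ⇒ φ → ψ  and  δ, Γ ⇒ χ
   yield the goal by invertibility of (→R) and the admissibility of (→L) for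
   an arbitrary antecedent ψ (this is where the second copy of ψ → δ is used). *)

From Stdlib Require Import List Permutation Lia.
Import ListNotations.

Lemma form_eq_dec : forall x y : form, {x = y} + {x <> y}.
Proof. repeat decide equality. Qed.

Definition debox1 (f : form) : form :=
  match f with Box g => g | _ => f end.

(* Strip one box from every boxed formula of a context: the rule premises of
   (□→L) and (SLtR) turn the context Φ, □Γ into debox (Φ, □Γ) = Φ, Γ. *)
Definition debox (Δ : list form) : list form := map debox1 Δ.

(* Decides goals [Permutation l l'] from permutation hypotheses by comparing
   the number of occurrences of every formula; sublists that are variables
   (or [boxes Γ], [debox Γ]) are treated as opaque multisets. *)
Ltac perm_solve :=
  unfold boxes, debox in *;
  apply (Permutation_count_occ form_eq_dec); let x := fresh "x" in intro x;
  repeat match goal with H : Permutation _ _ |- _ =>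
    let H' := fresh "Hcount" in
    pose proof (proj1 (Permutation_count_occ form_eq_dec _ _) H x) as H'; clear H end;
  repeat progress (simpl in *; rewrite ?map_app, ?count_occ_app in *);
  repeat match goal with
  | |- context [form_eq_dec ?a ?b] => destruct (form_eq_dec a b)
  | H : context [form_eq_dec ?a ?b] |- _ => destruct (form_eq_dec a b) end;
  lia.

Lemma box_free_debox : forall Φ, box_free Φ -> debox Φ = Φ.
Proof.
  induction 1 as [|f Φ Hf _ IH]; [reflexivity|].
  destruct f; simpl in *; rewrite ?IH; tauto.
Qed.

Lemma debox_boxes : forall Γ, debox (boxes Γ) = Γ.
Proof.
  intro Γ; unfold debox, boxes; rewrite map_map; apply map_id.
Qed.

Lemma debox_rule_context : forall Δ Φ Γ,
  box_free Φ -> Permutation Δ (Φ ++ boxes Γ) -> Permutation (debox Δ) (Φ ++ Γ).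
Proof.
  intros Δ Φ Γ HΦ HP.
  rewrite <- (box_free_debox Φ HΦ), <- (debox_boxes Γ).
  unfold debox; rewrite <- map_app; apply Permutation_map, HP.
Qed.

Lemma split_context : forall Δ,
  exists Φ Γ, box_free Φ /\ Permutation Δ (Φ ++ boxes Γ).
Proof.
  induction Δ as [|f Δ (Φ & Γ & HΦ & HP)].
  - exists [], []; split; [constructor | reflexivity].
  - destruct f as [p| |f1 f2|f1 f2|f1 f2|g].
    6: exists Φ, (g :: Γ); split; [exact HΦ | perm_solve].
    all: lazymatch goal with
         | |- exists _ _, _ /\ Permutation (?f :: _) _ => exists (f :: Φ), Γ
         end;
         split; [constructor; [simpl; tauto | exact HΦ] | perm_solve].
Qed.

Lemma perm_two_heads : forall Δ (A X : form) G Γ,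
  Permutation Δ (A :: G) -> Permutation Δ (X :: Γ) ->
  (A = X /\ Permutation G Γ) \/
  (exists G', Permutation G (X :: G') /\ Permutation Γ (A :: G')).
Proof.
  intros Δ A X G Γ HA HX.
  assert (HP : Permutation (A :: G) (X :: Γ)) by perm_solve.
  destruct (form_eq_dec A X) as [<-|Hne].
  - left; split; [reflexivity | eapply Permutation_cons_inv, HP].
  - right. assert (Hin : In A Γ).
    { destruct (Permutation_in A HP (in_eq A G)); [congruence | assumption]. }
    destruct (in_split _ _ Hin) as (Γ1 & Γ2 & ->).
    exists (Γ1 ++ Γ2); split; perm_solve.
Qed.

Lemma G4iSLt_perm : forall Δ c, G4iSLt Δ c ->
  forall Δ', Permutation Δ Δ' -> G4iSLt Δ' c.
Proof.
  induction 1; intros Δ' HP.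
  - apply (BotL _ Γ); perm_solve.
  - apply (IdP _ Γ); perm_solve.
  - apply (AndL _ Γ φ ψ); [perm_solve | assumption].
  - apply AndR; auto.
  - apply (OrL _ Γ φ ψ); [perm_solve | assumption | assumption].
  - apply OrR1; auto.
  - apply OrR2; auto.
  - apply (PImpL _ Γ p φ); [perm_solve | assumption].
  - apply ImpR; auto.
  - apply (BoxImpL _ Φ Γ φ ψ); [assumption | perm_solve | assumption | assumption].
  - apply (SLtR _ Φ Γ φ); [assumption | perm_solve | assumption].
  - apply (AndImpL _ Γ φ ψ χ); [perm_solve | assumption].
  - apply (OrImpL _ Γ φ ψ χ); [perm_solve | assumption].
  - apply (ImpImpL _ Γ φ ψ χ); [perm_solve | assumption | assumption].
Qed.

Ltac exchange H := eapply G4iSLt_perm; [exact H | perm_solve].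

(* The modal rules in context-free form: no need to split the context into
   its boxed and unboxed parts by hand. *)
Lemma SLtR_derived : forall Δ φ,
  G4iSLt (Box φ :: debox Δ) φ -> G4iSLt Δ (Box φ).
Proof.
  intros Δ φ H. destruct (split_context Δ) as (Φ & Γ & HΦ & HP).
  pose proof (debox_rule_context Δ Φ Γ HΦ HP).
  apply (SLtR _ Φ Γ φ HΦ HP); exchange H.
Qed.

Lemma BoxImpL_derived : forall Δ φ ψ χ,
  G4iSLt (Box φ :: ψ :: debox Δ) φ -> G4iSLt (ψ :: Δ) χ ->
  G4iSLt (Imp (Box φ) ψ :: Δ) χ.
Proof.
  intros Δ φ ψ χ H1 H2. destruct (split_context Δ) as (Φ & Γ & HΦ & HP).
  pose proof (debox_rule_context Δ Φ Γ HΦ HP).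
  apply (BoxImpL _ Φ Γ φ ψ χ HΦ); [perm_solve | exchange H1 | exchange H2].
Qed.

Lemma weakening : forall Δ c, G4iSLt Δ c -> forall A, G4iSLt (A :: Δ) c.
Proof.
  induction 1; intro A.
  - apply (BotL _ (A :: Γ)); perm_solve.
  - apply (IdP _ (A :: Γ)); perm_solve.
  - apply (AndL _ (A :: Γ) φ ψ); [perm_solve | exchange (IHG4iSLt A)].
  - apply AndR; auto.
  - apply (OrL _ (A :: Γ) φ ψ); [perm_solve | exchange (IHG4iSLt1 A) | exchange (IHG4iSLt2 A)].
  - apply OrR1; auto.
  - apply OrR2; auto.
  - apply (PImpL _ (A :: Γ) p φ); [perm_solve | exchange (IHG4iSLt A)].
  - apply ImpR; exchange (IHG4iSLt A).
  - pose proof (debox_rule_context _ _ _ H (Permutation_refl (Φ ++ boxes Γ))).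
    eapply G4iSLt_perm; [apply (BoxImpL_derived (A :: Φ ++ boxes Γ) φ ψ) | perm_solve].
    + exchange (IHG4iSLt1 (debox1 A)).
    + exchange (IHG4iSLt2 A).
  - pose proof (debox_rule_context _ _ _ H H0).
    apply SLtR_derived; exchange (IHG4iSLt (debox1 A)).
  - apply (AndImpL _ (A :: Γ) φ ψ χ); [perm_solve | exchange (IHG4iSLt A)].
  - apply (OrImpL _ (A :: Γ) φ ψ χ); [perm_solve | exchange (IHG4iSLt A)].
  - apply (ImpImpL _ (A :: Γ) φ ψ χ);
      [perm_solve | exchange (IHG4iSLt1 A) | exchange (IHG4iSLt2 A)].
Qed.

Lemma weakening_app : forall L Δ c, G4iSLt Δ c -> G4iSLt (L ++ Δ) c.
Proof. induction L; intros; simpl; auto using weakening. Qed.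

(* A boxed antecedent formula □B may be replaced by B.  This is what lets the
   replaced formulas pass into the deboxed premise context of a modal rule. *)
Lemma unbox_left : forall Δ c, G4iSLt Δ c ->
  forall B G, Permutation Δ (Box B :: G) -> G4iSLt (B :: G) c.
Proof.
  induction 1; intros B G HP.
  - destruct (perm_two_heads _ _ _ _ _ HP H) as [[[=] _]|(G' & HG & HΓ)].
    apply (BotL _ (B :: G')); perm_solve.
  - destruct (perm_two_heads _ _ _ _ _ HP H) as [[[=] _]|(G' & HG & HΓ)].
    apply (IdP _ (B :: G')); perm_solve.
  - destruct (perm_two_heads _ _ _ _ _ HP H) as [[[=] _]|(G' & HG & HΓ)].
    apply (AndL _ (B :: G') φ ψ);
      [perm_solve | exchange (IHG4iSLt B (φ :: ψ :: G') ltac:(perm_solve))].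
  - apply AndR; eauto.
  - destruct (perm_two_heads _ _ _ _ _ HP H) as [[[=] _]|(G' & HG & HΓ)].
    apply (OrL _ (B :: G') φ ψ);
      [perm_solve | exchange (IHG4iSLt1 B (φ :: G') ltac:(perm_solve))
                  | exchange (IHG4iSLt2 B (ψ :: G') ltac:(perm_solve))].
  - apply OrR1; eauto.
  - apply OrR2; eauto.
  - destruct (perm_two_heads _ _ _ _ _ HP H) as [[[=] _]|(G' & HG & HΓ)].
    destruct (perm_two_heads _ _ _ _ _ HΓ (Permutation_refl (Imp (Var p) φ :: Γ)))
      as [[[=] _]|(G'' & HG' & HΓ')].
    apply (PImpL _ (B :: G'') p φ);
      [perm_solve | exchange (IHG4iSLt B (Var p :: φ :: G'') ltac:(perm_solve))].
  - apply ImpR; exchange (IHG4iSLt B (φ :: G) ltac:(perm_solve)).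
  - destruct (perm_two_heads _ _ _ _ _ HP H0) as [[[=] _]|(G' & HG & HΓ)].
    pose proof (debox_rule_context (Box B :: G') _ _ H (Permutation_sym HΓ)).
    eapply G4iSLt_perm; [apply (BoxImpL_derived (B :: G') φ ψ) | perm_solve].
    + destruct B as [| | | | |B'];
        [exchange H1 .. | exchange (IHG4iSLt1 B' (Box φ :: ψ :: debox G') ltac:(perm_solve))].
    + exchange (IHG4iSLt2 B (ψ :: G') ltac:(perm_solve)).
  - pose proof (debox_rule_context (Box B :: G) Φ Γ H ltac:(perm_solve)).
    apply SLtR_derived.
    destruct B as [| | | | |B'];
      [exchange H1 .. | exchange (IHG4iSLt B' (Box φ :: debox G) ltac:(perm_solve))].
  - destruct (perm_two_heads _ _ _ _ _ HP H) as [[[=] _]|(G' & HG & HΓ)].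
    apply (AndImpL _ (B :: G') φ ψ χ);
      [perm_solve | exchange (IHG4iSLt B (Imp φ (Imp ψ χ) :: G') ltac:(perm_solve))].
  - destruct (perm_two_heads _ _ _ _ _ HP H) as [[[=] _]|(G' & HG & HΓ)].
    apply (OrImpL _ (B :: G') φ ψ χ);
      [perm_solve | exchange (IHG4iSLt B (Imp φ χ :: Imp ψ χ :: G') ltac:(perm_solve))].
  - destruct (perm_two_heads _ _ _ _ _ HP H) as [[[=] _]|(G' & HG & HΓ)].
    apply (ImpImpL _ (B :: G') φ ψ χ);
      [perm_solve | exchange (IHG4iSLt1 B (Imp ψ χ :: G') ltac:(perm_solve))
                  | exchange (IHG4iSLt2 B (χ :: G') ltac:(perm_solve))].
Qed.

Lemma debox_app : forall L G c, G4iSLt (L ++ G) c -> G4iSLt (debox L ++ G) c.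
Proof.
  induction L as [|A L IH]; intros G c H; [exact H|].
  assert (HA : G4iSLt (debox1 A :: L ++ G) c).
  { destruct A; try exact H. apply (unbox_left _ _ H); reflexivity. }
  assert (HL : G4iSLt (debox L ++ debox1 A :: G) c) by (apply IH; exchange HA).
  exchange HL.
Qed.

Lemma ImpR_inversion : forall Δ c, G4iSLt Δ c ->
  forall A B, c = Imp A B -> G4iSLt (A :: Δ) B.
Proof.
  induction 1; intros A B E; try discriminate.
  - apply (BotL _ (A :: Γ)); perm_solve.
  - apply (AndL _ (A :: Γ) φ ψ); [perm_solve | exchange (IHG4iSLt A B E)].
  - apply (OrL _ (A :: Γ) φ ψ);
      [perm_solve | exchange (IHG4iSLt1 A B E) | exchange (IHG4iSLt2 A B E)].
  - apply (PImpL _ (A :: Γ) p φ); [perm_solve | exchange (IHG4iSLt A B E)].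
  - injection E as -> ->; exact H.
  - pose proof (debox_rule_context _ _ _ H (Permutation_refl (Φ ++ boxes Γ))).
    eapply G4iSLt_perm; [apply (BoxImpL_derived (A :: Φ ++ boxes Γ) φ ψ) | perm_solve].
    + exchange (weakening _ _ H1 (debox1 A)).
    + exchange (IHG4iSLt2 A B E).
  - apply (AndImpL _ (A :: Γ) φ ψ χ); [perm_solve | exchange (IHG4iSLt A B E)].
  - apply (OrImpL _ (A :: Γ) φ ψ χ); [perm_solve | exchange (IHG4iSLt A B E)].
  - apply (ImpImpL _ (A :: Γ) φ ψ χ);
      [perm_solve | exchange (weakening _ _ H0 A) | exchange (IHG4iSLt2 A B E)].
Qed.

Definition is_compound (f : form) : Prop :=
  match f with And _ _ | Or _ _ | Imp _ _ => True | _ => False end.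

Lemma debox_rule_context_compound : forall X G Φ Γ, is_compound X ->
  box_free Φ -> Permutation (X :: G) (Φ ++ boxes Γ) -> Permutation (X :: debox G) (Φ ++ Γ).
Proof.
  intros [] G Φ Γ HX; simpl in HX; try contradiction; apply debox_rule_context.
Qed.

(* A generic inversion principle: an antecedent formula X may be replaced by
   the formulas Ys whenever this is sound for every rule with principal
   formula X.  All other rules commute with the replacement. *)
Section LeftReplacement.

Variable R : form -> list form -> Prop.

Hypothesis R_compound : forall X Ys, R X Ys -> is_compound X.
Hypothesis R_AndL : forall A B Ys G c, R (And A B) Ys ->
  G4iSLt (A :: B :: G) c -> G4iSLt (Ys ++ G) c.
Hypothesis R_OrL : forall A B Ys G c, R (Or A B) Ys ->
  G4iSLt (A :: G) c -> G4iSLt (B :: G) c -> G4iSLt (Ys ++ G) c.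
Hypothesis R_PImpL : forall p A Ys G c, R (Imp (Var p) A) Ys ->
  G4iSLt (Var p :: A :: G) c -> G4iSLt (Ys ++ Var p :: G) c.
Hypothesis R_AndImpL : forall A B C Ys G c, R (Imp (And A B) C) Ys ->
  G4iSLt (Imp A (Imp B C) :: G) c -> G4iSLt (Ys ++ G) c.
Hypothesis R_OrImpL : forall A B C Ys G c, R (Imp (Or A B) C) Ys ->
  G4iSLt (Imp A C :: Imp B C :: G) c -> G4iSLt (Ys ++ G) c.
Hypothesis R_ImpImpL : forall A B C Ys G c, R (Imp (Imp A B) C) Ys ->
  G4iSLt (Imp B C :: G) (Imp A B) -> G4iSLt (C :: G) c -> G4iSLt (Ys ++ G) c.
Hypothesis R_BoxImpL : forall A B Ys G c, R (Imp (Box A) B) Ys ->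
  G4iSLt (Box A :: B :: debox G) A -> G4iSLt (B :: G) c -> G4iSLt (Ys ++ G) c.

Lemma left_replacement : forall Δ c, G4iSLt Δ c ->
  forall X Ys G, R X Ys -> Permutation Δ (X :: G) -> G4iSLt (Ys ++ G) c.
Proof.
  induction 1; intros X Ys G HR HP; pose proof (R_compound _ _ HR) as HX.
  - destruct (perm_two_heads _ _ _ _ _ HP H) as [[-> _]|(G' & HG & HΓ)]; [destruct HX|].
    apply (BotL _ (Ys ++ G')); perm_solve.
  - destruct (perm_two_heads _ _ _ _ _ HP H) as [[-> _]|(G' & HG & HΓ)]; [destruct HX|].
    apply (IdP _ (Ys ++ G')); perm_solve.
  - destruct (perm_two_heads _ _ _ _ _ HP H) as [[-> HG]|(G' & HG & HΓ)].
    + apply (R_AndL φ ψ Ys G χ HR); exchange H0.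
    + apply (AndL _ (Ys ++ G') φ ψ);
        [perm_solve | exchange (IHG4iSLt X Ys (φ :: ψ :: G') HR ltac:(perm_solve))].
  - apply AndR; eauto.
  - destruct (perm_two_heads _ _ _ _ _ HP H) as [[-> HG]|(G' & HG & HΓ)].
    + apply (R_OrL φ ψ Ys G χ HR); [exchange H0 | exchange H1].
    + apply (OrL _ (Ys ++ G') φ ψ);
        [perm_solve | exchange (IHG4iSLt1 X Ys (φ :: G') HR ltac:(perm_solve))
                    | exchange (IHG4iSLt2 X Ys (ψ :: G') HR ltac:(perm_solve))].
  - apply OrR1; eauto.
  - apply OrR2; eauto.
  - destruct (perm_two_heads _ _ _ _ _ HP H) as [[-> _]|(G' & HG & HΓ)]; [destruct HX|].
    destruct (perm_two_heads _ _ _ _ _ HΓ (Permutation_refl (Imp (Var p) φ :: Γ)))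
      as [[-> HG']|(G'' & HG' & HΓ')].
    + eapply G4iSLt_perm; [apply (R_PImpL p φ Ys Γ χ HR H0) | perm_solve].
    + apply (PImpL _ (Ys ++ G'') p φ);
        [perm_solve | exchange (IHG4iSLt X Ys (Var p :: φ :: G'') HR ltac:(perm_solve))].
  - apply ImpR; exchange (IHG4iSLt X Ys (φ :: G) HR ltac:(perm_solve)).
  - destruct (perm_two_heads _ _ _ _ _ HP H0) as [[-> HG]|(G' & HG & HΓ)].
    + pose proof (debox_rule_context G Φ Γ H HG).
      apply (R_BoxImpL φ ψ Ys G χ HR); [exchange H1 | exchange H2].
    + pose proof (debox_rule_context_compound X G' Φ Γ HX H (Permutation_sym HΓ)).
      eapply G4iSLt_perm; [apply (BoxImpL_derived (Ys ++ G') φ ψ) | perm_solve].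
      * pose proof (IHG4iSLt1 X Ys (Box φ :: ψ :: debox G') HR ltac:(perm_solve)) as HY.
        apply (debox_app Ys) in HY; exchange HY.
      * exchange (IHG4iSLt2 X Ys (ψ :: G') HR ltac:(perm_solve)).
  - pose proof (debox_rule_context_compound X G Φ Γ HX H ltac:(perm_solve)).
    apply SLtR_derived.
    pose proof (IHG4iSLt X Ys (Box φ :: debox G) HR ltac:(perm_solve)) as HY.
    apply (debox_app Ys) in HY; exchange HY.
  - destruct (perm_two_heads _ _ _ _ _ HP H) as [[-> HG]|(G' & HG & HΓ)].
    + apply (R_AndImpL φ ψ χ Ys G δ HR); exchange H0.
    + apply (AndImpL _ (Ys ++ G') φ ψ χ);
        [perm_solve | exchange (IHG4iSLt X Ys (Imp φ (Imp ψ χ) :: G') HR ltac:(perm_solve))].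
  - destruct (perm_two_heads _ _ _ _ _ HP H) as [[-> HG]|(G' & HG & HΓ)].
    + apply (R_OrImpL φ ψ χ Ys G δ HR); exchange H0.
    + apply (OrImpL _ (Ys ++ G') φ ψ χ);
        [perm_solve | exchange (IHG4iSLt X Ys (Imp φ χ :: Imp ψ χ :: G') HR ltac:(perm_solve))].
  - destruct (perm_two_heads _ _ _ _ _ HP H) as [[-> HG]|(G' & HG & HΓ)].
    + apply (R_ImpImpL φ ψ χ Ys G δ HR); [exchange H0 | exchange H1].
    + apply (ImpImpL _ (Ys ++ G') φ ψ χ);
        [perm_solve | exchange (IHG4iSLt1 X Ys (Imp ψ χ :: G') HR ltac:(perm_solve))
                    | exchange (IHG4iSLt2 X Ys (χ :: G') HR ltac:(perm_solve))].
Qed.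

End LeftReplacement.

Inductive left_invertible : form -> list form -> Prop :=
| inv_And A B : left_invertible (And A B) [A; B]
| inv_Or1 A B : left_invertible (Or A B) [A]
| inv_Or2 A B : left_invertible (Or A B) [B]
| inv_PImp p C : left_invertible (Imp (Var p) C) [C]
| inv_AndImp A B C : left_invertible (Imp (And A B) C) [Imp A (Imp B C)]
| inv_OrImp A B C : left_invertible (Imp (Or A B) C) [Imp A C; Imp B C]
| inv_ImpImp A B C : left_invertible (Imp (Imp A B) C) [C]
| inv_BoxImp A B : left_invertible (Imp (Box A) B) [B].

Lemma left_inversion : forall Δ c, G4iSLt Δ c ->
  forall X Ys G, left_invertible X Ys -> Permutation Δ (X :: G) -> G4iSLt (Ys ++ G) c.
Proof.
  apply left_replacement.
  - intros X Ys []; exact I.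
  - intros A B Ys G c HR H; inversion HR; exact H.
  - intros A B Ys G c HR H1 H2; inversion HR; assumption.
  - intros p A Ys G c HR H; inversion HR; exchange H.
  - intros A B C Ys G c HR H; inversion HR; exact H.
  - intros A B C Ys G c HR H; inversion HR; exact H.
  - intros A B C Ys G c HR _ H; inversion HR; exact H.
  - intros A B Ys G c HR _ H; inversion HR; exact H.
Qed.

(* The extra context S absorbs the
   formulas added to the right premise along the induction on D ⇒ ψ. *)
Lemma imp_left_admissible : forall D ψ, G4iSLt D ψ ->
  forall S δ c, G4iSLt (δ :: D ++ S) c -> G4iSLt (Imp ψ δ :: D ++ S) c.
Proof.
  induction 1; intros S d c Hd.
  - apply (BotL _ (Imp χ d :: Γ ++ S)); perm_solve.
  - apply (PImpL _ (Γ ++ S) p d); [perm_solve | exchange Hd].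
  - pose proof (left_inversion _ _ Hd _ _
      (d :: Γ ++ S) (inv_And φ ψ) ltac:(perm_solve)) as Hd'.
    apply (AndL _ (Imp χ d :: Γ ++ S) φ ψ);
      [perm_solve | exchange (IHG4iSLt S d c ltac:(exchange Hd'))].
  - apply (AndImpL _ (Γ ++ S) φ ψ d); [perm_solve |].
    exact (IHG4iSLt1 S (Imp ψ d) c (IHG4iSLt2 S d c Hd)).
  - pose proof (left_inversion _ _ Hd _ _
      (d :: Γ ++ S) (inv_Or1 φ ψ) ltac:(perm_solve)) as Hd1.
    pose proof (left_inversion _ _ Hd _ _
      (d :: Γ ++ S) (inv_Or2 φ ψ) ltac:(perm_solve)) as Hd2.
    apply (OrL _ (Imp χ d :: Γ ++ S) φ ψ);
      [perm_solve | exchange (IHG4iSLt1 S d c ltac:(exchange Hd1))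
                  | exchange (IHG4iSLt2 S d c ltac:(exchange Hd2))].
  - apply (OrImpL _ (Γ ++ S) φ ψ d); [perm_solve |].
    exchange (IHG4iSLt (S ++ [Imp ψ d]) d c ltac:(exchange (weakening _ _ Hd (Imp ψ d)))).
  - apply (OrImpL _ (Γ ++ S) φ ψ d); [perm_solve |].
    exchange (IHG4iSLt (S ++ [Imp φ d]) d c ltac:(exchange (weakening _ _ Hd (Imp φ d)))).
  - pose proof (left_inversion _ _ Hd _ _
      (d :: Var p :: Γ ++ S) (inv_PImp p φ) ltac:(perm_solve)) as Hd'.
    apply (PImpL _ (Imp χ d :: Γ ++ S) p φ);
      [perm_solve | exchange (IHG4iSLt S d c ltac:(exchange Hd'))].
  - apply (ImpImpL _ (Γ ++ S) φ ψ d); [perm_solve | | exact Hd].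
    apply ImpR; exchange (weakening_app (Imp ψ d :: S) _ _ H).
  - pose proof (left_inversion _ _ Hd _ _
      (d :: Φ ++ boxes Γ ++ S) (inv_BoxImp φ ψ) ltac:(perm_solve)) as Hd'.
    pose proof (debox_rule_context _ _ _ H (Permutation_refl (Φ ++ boxes Γ))).
    eapply G4iSLt_perm;
      [apply (BoxImpL_derived (Imp χ d :: Φ ++ boxes Γ ++ S) φ ψ) | perm_solve].
    + exchange (weakening_app (debox (Imp χ d :: S)) _ _ H1).
    + exchange (IHG4iSLt2 S d c ltac:(exchange Hd')).
  - pose proof (debox_rule_context _ _ _ H H0).
    apply BoxImpL_derived; [exchange (weakening_app (d :: debox S) _ _ H1) | exact Hd].
  - pose proof (left_inversion _ _ Hd _ _
      (d :: Γ ++ S) (inv_AndImp φ ψ χ) ltac:(perm_solve)) as Hd'.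
    apply (AndImpL _ (Imp δ d :: Γ ++ S) φ ψ χ);
      [perm_solve | exchange (IHG4iSLt S d c ltac:(exchange Hd'))].
  - pose proof (left_inversion _ _ Hd _ _
      (d :: Γ ++ S) (inv_OrImp φ ψ χ) ltac:(perm_solve)) as Hd'.
    apply (OrImpL _ (Imp δ d :: Γ ++ S) φ ψ χ);
      [perm_solve | exchange (IHG4iSLt S d c ltac:(exchange Hd'))].
  - pose proof (left_inversion _ _ Hd _ _
      (d :: Γ ++ S) (inv_ImpImp φ ψ χ) ltac:(perm_solve)) as Hd'.
    apply (ImpImpL _ (Imp δ d :: Γ ++ S) φ ψ χ);
      [perm_solve | exchange (weakening_app (Imp δ d :: S) _ _ H0)
                  | exchange (IHG4iSLt2 S d c ltac:(exchange Hd'))].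
Qed.

Inductive impimp_split : form -> list form -> Prop :=
| impimp_split_intro a b c : impimp_split (Imp (Imp a b) c) [a; Imp b c; Imp b c].

Lemma impimp_split_principal : forall a b c G δ,
  G4iSLt (Imp b c :: G) (Imp a b) -> G4iSLt (c :: G) δ ->
  G4iSLt (a :: Imp b c :: Imp b c :: G) δ.
Proof.
  intros a b c G δ H1 H2.
  pose proof (ImpR_inversion _ _ H1 a b eq_refl) as Hb.
  assert (Hc : G4iSLt (c :: (a :: Imp b c :: G) ++ []) δ)
    by exchange (weakening_app [a; Imp b c] _ _ H2).
  pose proof (imp_left_admissible _ _ Hb [] c δ Hc) as H.
  exchange H.
Qed.

Lemma impimp_inversion : forall Δ c, G4iSLt Δ c ->
  forall X Ys G, impimp_split X Ys -> Permutation Δ (X :: G) -> G4iSLt (Ys ++ G) c.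
Proof.
  apply left_replacement; intros * HR; inversion_clear HR.
  - exact I.
  - exact (impimp_split_principal _ _ _ G c).
Qed.

Theorem mainTheorem12 : forall (Γ : list form) (φ ψ δ χ : form),
  G4iSLt (Imp (Imp φ ψ) δ :: Γ) χ ->
  G4iSLt (φ :: Imp ψ δ :: Imp ψ δ :: Γ) χ.
Proof.
  intros Γ φ ψ δ χ H.
  exact (impimp_inversion _ _ H _ _ Γ (impimp_split_intro φ ψ δ) (Permutation_refl _)).
Qed.
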